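(* Let $u$ be a harmonic function on $V_m$, i.e. $H_m u(p)=0$ for every $p\in V_m\setminus V_0$. If, for each $w\in W_m$, $T_w=\{p_{w0},p_{w1},p_{w2}\}$ is a minimal cell in $V_m$, and we extend $u$ to $T_{w1}\cup T_{w2}$ with \[ u(p_{w10}) = \Big(1 - \frac{1}{h^2}\Big) u(p_{w1}) + \frac{1}{h^2} u(p_{w2}),\qquad u(p_{w20}) = u(p_{w10}), \] then $u$ is harmonic in $V_{m+1}$, i.e. $H_{m+1}u(p)=0$ for every $p\in V_{m+1}\setminus V_0$.
   Context: The Hata tree set is the unique compact $K\subset\mathbb{C}$ with $K=F_1(K)\cup F_2(K)$, where $F_1(z)=\alpha\bar z$, $F_2(z)=(1-|\alpha|^2)\bar z+|\alpha|^2$, and $0<|\alpha|,|1-\alpha|<1$. The boundary is $V_0=\{p_0,p_1,p_2\}=\{\alpha,0,1\}$. For a word $w=w_1\cdots w_m\in W_m=\{1,2\}^m$, $F_w=F_{w_1}\circ\cdots\circ F_{w_m}$, $p_{wi}=F_w(p_i)$, and $V_m=\bigcup_{w\in W_m}F_w(V_0)$; note $p_0=p_{12}$ and $|\alpha|^2=p_{10}=p_{21}$. A minimal cell in $V_m$ is $T_w=\{p_{w0},p_{w1},p_{w2}\}$ with $w\in W_m$; as points of $V_{m+1}$, $T_w=\{p_{w12},p_{w11},p_{w22}\}$, and $K_w\cap V_{m+1}=T_{w1}\cup T_{w2}$ with new points $p_{w10}=p_{w21}$ and $p_{w20}$. For a parameter $h>1$, the harmonic structure is given by the Laplacian on $V_0$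 (basis $\chi_\alpha,\chi_0,\chi_1$) \[ D=\begin{pmatrix}-h&h&0\\ h&-(h+1)&1\\ 0&1&-1\end{pmatrix}, \] with resistance renormalization factors $r_1=1/h$, $r_2=1-1/h^2$, and $r_w=r_{w_1}\cdots r_{w_m}$. The discrete Laplacians $H_m$ on $V_m$ are $H_m=\sum_{w\in W_m}\frac{1}{r_w}R_w^tDR_w$ (with $R_w u=u\circ F_w|_{V_0}$); explicitly, at $p=p_{w1}=p_{w'0}$, $H_mf(p)=\frac{1}{r_w}\big(f(p_{w2})-f(p_{w1})+h(f(p_{w0})-f(p_{w1}))\big)+\frac{h}{r_{w'}}\big(f(p_{w'1})-f(p_{w'0})\big)$; at $p=p_{w1}=p_{w'2}$, $H_mf(p)=\frac{1}{r_w}\big(f(p_{w2})-f(p_{w1})+h(f(p_{w0})-f(p_{w1}))\big)+\frac{1}{r_{w'}}\big(f(p_{w'1})-f(p_{w'2})\big)$; at $p=p_{w0}$ in no other cell, $H_mf(p)=\frac{h}{r_w}(f(p_{w1})-f(p_{w0}))$; at $p=p_{w2}$ in no other cell, $H_mf(p)=\frac{1}{r_w}(f(p_{w1})-f(p_{w2}))$. *)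

From HB Require Import structures.
From mathcomp Require Import all_boot all_order all_algebra.
From mathcomp Require Import complex.
Set Implicit Arguments. Unset Strict Implicit. Unset Printing Implicit Defensive.
Import Order.TTheory GRing.Theory Num.Theory.
Local Open Scope ring_scope.
Local Open Scope complex_scope.

Notation normc := ComplexField.Normc.normc.

Section Hata.
Variable R : rcfType.

Definition asq (a : R[i]) : R := normc a ^+ 2.

Definition F1 (a z : R[i]) : R[i] := a * conjc z.
Definition F2 (a z : R[i]) : R[i] := (1 - asq a)%:C * conjc z + (asq a)%:C.

Definition Fl (a : R[i]) (k : 'I_2) : R[i] -> R[i] :=
  if val k == 0%N then F1 a else F2 a.

(* F_w = F_{w_1} o ... o F_{w_m} for the word w = [:: w_1; ...; w_m] *)
Definition Fw (a : R[i]) (w : seq 'I_2) (z : R[i]) : R[i] :=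
  foldr (fun k z => Fl a k z) z w.

Definition pt (a : R[i]) (i : 'I_3) : R[i] :=
  if val i == 0%N then a else if val i == 1%N then 0 else 1.

Definition pw (a : R[i]) (w : seq 'I_2) (i : 'I_3) : R[i] := Fw a w (pt a i).

Definition inV (a : R[i]) (m : nat) (z : R[i]) : Prop :=
  exists (w : m.-tuple 'I_2) (i : 'I_3), z = pw a w i.
Definition inV0 (a : R[i]) (z : R[i]) : Prop := exists i : 'I_3, z = pt a i.

(* the Laplacian D on V_0, basis (chi_alpha, chi_0, chi_1) *)
Definition Dmat (h : R) : 'M[R]_3 :=
  \matrix_(i < 3, j < 3)
    nth 0 (nth [::] [:: [:: - h; h; 0]; [:: h; - (h + 1); 1]; [:: 0; 1; -1]] i) j.

Definition rl (h : R) (k : 'I_2) : R :=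
  if val k == 0%N then 1 / h else 1 - 1 / h ^+ 2.
Definition rw (h : R) (w : seq 'I_2) : R := \prod_(k <- w) rl h k.

(* H_m f (z) = sum_{w in W_m} (1/r_w) (R_w^t D R_w f)(z),
   where (R_w f)_j = f(p_{wj}) and (R_w^t v)(z) = sum_{i : p_{wi} = z} v_i *)
Definition Hm (a : R[i]) (h : R) (m : nat) (f : R[i] -> R) (z : R[i]) : R :=
  \sum_(w : m.-tuple 'I_2)
     (rw h w)^-1 * \sum_(i < 3) (pw a w i == z)%:R *
        \sum_(j < 3) Dmat h i j * f (pw a w j).

End Hata.

From HB Require Import structures.
From mathcomp Require Import all_boot all_order all_algebra complex ring.
Import Order.TTheory GRing.Theory Num.Theory.
Set Implicit Arguments. Unset Strict Implicit. Unset Printing Implicit Defensive.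
Local Open Scope ring_scope.

(* H_m is a sum over the cells w of W_m of local contributions.  For every cell
   w, the contributions of its subcells w1 and w2 add up, at every point, to the
   contribution of w: the harmonic-extension values make the terms at the new
   vertices p_{w10} = p_{w21} and p_{w20} vanish, and r_{wk} = r_w r_k restores
   the terms at the old vertices.  Hence H_{m+1} u = H_m u everywhere, which
   vanishes on V_m \ V_0 by assumption and trivially off V_m. *)

Lemma big_tuple_rcons (V : nmodType) (T : finType) (n : nat) (G : seq T -> V) :
  \sum_(t : n.+1.-tuple T) G t = \sum_(w : n.-tuple T) \sum_(k : T) G (rcons w k).
Proof.
rewrite pair_big /= (reindex (fun p : n.-tuple T * T => rcons_tuple p.1 p.2)) //.
apply: onW_bij; apply: inj_card_bij.
  by move=> [w k] [w' k'] /(congr1 val) /rcons_inj [/val_inj -> ->].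
by rewrite card_prod !card_tuple expnS mulnC.
Qed.

Lemma big_ord2 (V : nmodType) (F : 'I_2 -> V) :
  \sum_(i < 2) F i = F ord0 + F (inord 1).
Proof.
rewrite !big_ord_recr big_ord0 /= add0r.
by congr (_ + _); congr F; apply/val_inj; rewrite /= ?inordK.
Qed.

Lemma big_ord3 (V : nmodType) (F : 'I_3 -> V) :
  \sum_(i < 3) F i = F ord0 + F (inord 1) + F (inord 2).
Proof.
rewrite !big_ord_recr big_ord0 /= add0r.
by congr (_ + _ + _); congr F; apply/val_inj; rewrite /= ?inordK.
Qed.

Section HataCells.
Variables (R : rcfType) (a : R[i]) (h : R).
Local Open Scope complex_scope.

Lemma asqE : (asq a)%:C = a * conjc a.
Proof.
case: a => a1 a2; rewrite /asq /= sqr_sqrtr ?addr_ge0 ?sqr_ge0 //.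
by apply/eqP; rewrite eq_complex /=; apply/andP; split; apply/eqP; ring.
Qed.

Lemma F1_0 : F1 a 0 = 0.
Proof. by rewrite /F1 conjc0 mulr0. Qed.

Lemma F1_1 : F1 a 1 = a.
Proof. by rewrite /F1 conjc1 mulr1. Qed.

Lemma F2_1 : F2 a 1 = 1.
Proof. by rewrite /F2 conjc1 mulr1 -rmorphD subrK. Qed.

(* The two subcells meet at p_{w10} = p_{w21} = F_w(|alpha|^2). *)
Lemma F2_0 : F2 a 0 = F1 a a.
Proof. by rewrite /F2 /F1 conjc0 mulr0 add0r asqE. Qed.

Lemma pw_rcons (w : seq 'I_2) (k : 'I_2) (j : 'I_3) :
  pw a (rcons w k) j = Fw a w (Fl a k (pt a j)).
Proof. by rewrite /pw /Fw foldr_rcons. Qed.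

Lemma rw_rcons (w : seq 'I_2) (k : 'I_2) : rw h (rcons w k) = rw h w * rl h k.
Proof. by rewrite /rw -cats1 big_cat big_seq1. Qed.

Definition cellLap (u : R[i] -> R) (w : seq 'I_2) (z : R[i]) : R :=
  (rw h w)^-1 * \sum_(i < 3) (pw a w i == z)%:R * \sum_(j < 3) Dmat h i j * u (pw a w j).

Lemma HmE (m : nat) (u : R[i] -> R) (z : R[i]) :
  Hm a h m u z = \sum_(w : m.-tuple 'I_2) cellLap u w z.
Proof. by []. Qed.

Definition harmonic_ext (u : R[i] -> R) (w : seq 'I_2) : Prop :=
  u (pw a (rcons w ord0) ord0)
    = (1 - 1 / h ^+ 2) * u (pw a w (inord 1)) + 1 / h ^+ 2 * u (pw a w (inord 2))
  /\ u (pw a (rcons w (inord 1)) ord0) = u (pw a (rcons w ord0) ord0).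

Hypotheses (h_neq0 : h != 0) (hsq_neq1 : h ^+ 2 != 1).

Lemma rw_neq0 (w : seq 'I_2) : rw h w != 0.
Proof.
rewrite prodf_seq_neq0; apply/allP => k _ /=; rewrite /rl.
case: ifP => _; first by rewrite div1r invr_neq0.
by rewrite subr_eq0 eq_sym div1r invr_eq1.
Qed.

Lemma cellLap_rcons (u : R[i] -> R) (w : seq 'I_2) (z : R[i]) :
  harmonic_ext u w -> \sum_(k < 2) cellLap u (rcons w k) z = cellLap u w z.
Proof.
rewrite /harmonic_ext big_ord2 /cellLap !big_ord3 !pw_rcons !rw_rcons /Dmat !mxE.
rewrite /pw /pt /Fl /rl /= !inordK //= F1_0 F1_1 F2_0 F2_1 => -[-> ->].
have hq : h ^+ 2 - 1 != 0 by rewrite subr_eq0.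
by field; rewrite rw_neq0 h_neq0 hq.
Qed.

Lemma Hm_succ (m : nat) (u : R[i] -> R) :
  (forall w : m.-tuple 'I_2, harmonic_ext u w) -> Hm a h m.+1 u =1 Hm a h m u.
Proof.
move=> ext z; rewrite !HmE (big_tuple_rcons m (fun w => cellLap u w z)).
by apply: eq_bigr => w _; apply: cellLap_rcons.
Qed.

End HataCells.

Section VertexSets.
Variables (R : rcfType) (a : R[i]) (m : nat).

Lemma inVP (z : R[i]) :
  reflect (inV a m z) [exists w : m.-tuple 'I_2, [exists j, pw a w j == z]].
Proof.
apply: (iffP existsP) => [[w /existsP [j /eqP wjz]] | [w [j zwj]]].
  by exists w, j.
by exists w; apply/existsP; exists j; rewrite zwj.
Qed.

Lemma Hm_notin_V (h : R) (u : R[i] -> R) (z : R[i]) :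
  ~ inV a m z -> Hm a h m u z = 0.
Proof.
move=> zNV; rewrite /Hm big1 // => w _; rewrite big1 ?mulr0 // => j _.
case: eqP => [wjz | _]; last by rewrite mul0r.
by case: zNV; exists w, j.
Qed.

End VertexSets.

Theorem mainTheorem1 (R : rcfType) (a : R[i]) (h : R) (m : nat) (u : R[i] -> R) :
  0 < normc a < 1 -> 0 < normc (1 - a) < 1 -> 1 < h ->
  (forall z, inV a m z -> ~ inV0 a z -> Hm a h m u z = 0) ->
  (forall w : m.-tuple 'I_2,
      u (pw a (rcons w ord0) ord0)
        = (1 - 1 / h ^+ 2) * u (pw a w (inord 1)) + 1 / h ^+ 2 * u (pw a w (inord 2))
   /\ u (pw a (rcons w (inord 1)) ord0) = u (pw a (rcons w ord0) ord0)) ->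
  forall z, inV a m.+1 z -> ~ inV0 a z -> Hm a h m.+1 u z = 0.
Proof.
move=> _ _ h_gt1 harm ext z _ zNV0.
have h_neq0 : h != 0 by rewrite gt_eqF // (lt_trans ltr01 h_gt1).
have hsq_neq1 : h ^+ 2 != 1 by rewrite gt_eqF // exprn_egt1.
rewrite (Hm_succ h_neq0 hsq_neq1 ext).
have [zV | zNV] := inVP a m z; [exact: harm | exact: Hm_notin_V].
Qed.
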